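(* Let $L\ge2$ and let $[0,1]^2=S_0\supset S_1\supset\cdots$ be such that each $S_n$ is the union of $L^n$ squares of $\mathcal{D}_n$, one from each column; let $\mathcal{S}_n=\{Q\in\mathcal{D}_n:Q\subset S_n\}$. There is a constant $C$ depending only on $L$ such that for all $n$ and all $i,j\in\{1,\dots,n\}$, \[ \#\bigl\{(Q,Q')\in\mathcal{S}_n\times\mathcal{S}_n:\ |x(Q)-x(Q')|\le L^{-i},\ |y(Q)-y(Q')|\ge L^{-j}\bigr\}\le C\,L^{2n+j-2i}. \]
   Context: $\mathcal{D}_n$ is the set of closed squares obtained by dividing $[0,1]^2$ into an $L^n\times L^n$ grid. For $Q\in\mathcal{D}_n$, $(x(Q),y(Q))$ denotes the lower-left corner of $Q$. *)

From HB Require Import structures.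
From mathcomp Require Import all_boot all_order all_algebra.
From mathcomp Require Import boolp classical_sets reals.
Unset Strict Implicit. Unset Printing Implicit Defensive.
Import Order.TTheory GRing.Theory Num.Theory.
Local Open Scope ring_scope.
Local Open Scope classical_set_scope.

(* The closed dyadic-type square of generation n in column a, row b:
   [a/L^n, (a+1)/L^n] x [b/L^n, (b+1)/L^n]. Its lower-left corner is
   (a/L^n, b/L^n). Elements of D_n are those with a, b < L^n. *)
Definition dsq (R : realType) (L n a b : nat) : set (R * R) :=
  [set p | (a%:R / (L ^ n)%:R <= p.1 <= a.+1%:R / (L ^ n)%:R) /\
           (b%:R / (L ^ n)%:R <= p.2 <= b.+1%:R / (L ^ n)%:R)].

Definition xcor (R : realType) (L n a : nat) : R := a%:R / (L ^ n)%:R.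

Definition unit_square (R : realType) : set (R * R) :=
  [set p | (0 <= p.1 <= 1) /\ (0 <= p.2 <= 1)].

Definition one_per_column (R : realType) (L n : nat) (Sn : set (R * R)) : Prop :=
  exists f : nat -> nat, (forall a, (a < L ^ n)%N -> (f a < L ^ n)%N) /\
    Sn = \bigcup_(a in [set a : nat | (a < L ^ n)%N]) dsq R L n a (f a).

Definition admissible_seq (R : realType) (L : nat) (S : nat -> set (R * R)) : Prop :=
  S 0%N = unit_square R /\ (forall n, S n.+1 `<=` S n) /\
  (forall n, one_per_column R L n (S n)).

(* Index type of D_n : pairs (column, row) with entries < L^n. *)
Definition Didx (L n : nat) := ('I_(L ^ n) * 'I_(L ^ n))%type.

Definition inSn (R : realType) (L n : nat) (S : nat -> set (R * R)) (Q : Didx L n) : Prop :=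
  dsq R L n Q.1 Q.2 `<=` S n.

Definition pair_set (R : realType) (L n i j : nat) (S : nat -> set (R * R)) :
  {set Didx L n * Didx L n} :=
  [set QQ : Didx L n * Didx L n |
     `[< inSn R L n S QQ.1 /\ inSn R L n S QQ.2 /\
         `|xcor R L n QQ.1.1 - xcor R L n QQ.2.1| <= ((L ^ i)%:R)^-1 /\
         `|xcor R L n QQ.1.2 - xcor R L n QQ.2.2| >= ((L ^ j)%:R)^-1 >]].

From HB Require Import structures.
From mathcomp Require Import all_boot all_order all_algebra.
From mathcomp Require Import boolp classical_sets reals.
From mathcomp Require Import zify.
Import Order.TTheory GRing.Theory Num.Theory.
Local Open Scope ring_scope.
Local Open Scope classical_set_scope.

(* Since S_n is contained in S_m and S_m has one square per column, a square of
   S_n in column a lies, for every m <= n, in the square of S_m of column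
   a / L^(n-m).  For m = n this says that a square of S_n is determined by its
   column; for m = j it says that two squares of S_n whose columns lie in a
   common block of L^(n-j) columns have rows less than L^(n-j) apart, i.e.
   y-distance < L^-j.  Hence a counted pair is determined by a pair of columns
   at distance <= L^(n-i) straddling one of the L^j block boundaries, and each
   boundary is straddled by at most 2 (L^(n-i) + 1)^2 such pairs. *)

Set Implicit Arguments.
Unset Strict Implicit.

Lemma divn_eqE (B a c : nat) : (0 < B)%N ->
  (a %/ B == c)%N = (c * B <= a < c.+1 * B)%N.
Proof. by move=> B_gt0; rewrite eqn_leq -ltnS ltn_divLR // leq_divRL // andbC. Qed.

Lemma eq_divn_ltn_dist (B b b' : nat) : (0 < B)%N -> (b %/ B = b' %/ B)%N ->
  (b' < b + B)%N && (b < b' + B)%N.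
Proof. by move=> B_gt0 eq_bb'; apply/andP; split; lia. Qed.

Section Cells.
Context {R : realType} {L : nat}.
Hypothesis L_gt0 : (0 < L)%N.

Lemma ler_nat_frac (x d y e : nat) : (0 < d)%N -> (0 < e)%N ->
  (x%:R / d%:R <= y%:R / e%:R :> R) = (x * e <= y * d)%N.
Proof.
move=> d_gt0 e_gt0.
by rewrite ler_pdivrMr ?ltr0n // mulrAC ler_pdivlMr ?ltr0n // -!natrM ler_nat.
Qed.

Definition cell_mid (n a : nat) : R := (2 * a).+1%:R / (2 * L ^ n)%:R.

Lemma cell_midE (m n a c : nat) : (m <= n)%N ->
  (c%:R / (L ^ m)%:R <= cell_mid n a <= c.+1%:R / (L ^ m)%:R)
    = (a %/ L ^ (n - m) == c)%N.
Proof.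
move=> mn; have Lm_gt0 : (0 < L ^ m)%N by rewrite expn_gt0 L_gt0.
have B_gt0 : (0 < L ^ (n - m))%N by rewrite expn_gt0 L_gt0.
rewrite /cell_mid !ler_nat_frac ?muln_gt0 ?expn_gt0 ?L_gt0 // divn_eqE //.
rewrite -(subnK mn) expnD !mulnA !leq_pmul2r // subnK //.
set B := (L ^ (n - m))%N; lia.
Qed.

(* Closed squares of one generation share edges, but the centre of a square lies
   in no other square of its generation. *)
Definition dsq_center (n a b : nat) : R * R := (cell_mid n a, cell_mid n b).

Lemma dsq_centerE (m n a b c d : nat) : (m <= n)%N ->
  dsq R L m c d (dsq_center n a b)
    <-> (a %/ L ^ (n - m) == c)%N /\ (b %/ L ^ (n - m) == d)%N.
Proof. by move=> mn; rewrite /dsq /= !cell_midE. Qed.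

Lemma dsq_center_mem (n a b : nat) : dsq R L n a b (dsq_center n a b).
Proof. by apply/dsq_centerE; rewrite // subnn expn0 !divn1. Qed.

Lemma xcor_distE (n a a' : nat) :
  `|xcor R L n a - xcor R L n a'| = `|a%:R - a'%:R| / (L ^ n)%:R.
Proof. by rewrite /xcor -mulrBl normrM normfV (ger0_norm (ler0n _ _)). Qed.

Lemma invr_expn_nat (k n : nat) : (k <= n)%N ->
  ((L ^ k)%:R)^-1 = (L ^ (n - k))%:R / (L ^ n)%:R :> R.
Proof.
move=> kn; rewrite -(subnKC kn) expnD natrM invfM mulrCA subnKC // divff ?mulr1 //.
by rewrite pnatr_eq0 -lt0n expn_gt0 L_gt0.
Qed.

Lemma ler_xcor_dist (k n a a' : nat) : (k <= n)%N ->
  (`|xcor R L n a - xcor R L n a'| <= ((L ^ k)%:R)^-1)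
    = (a' <= a + L ^ (n - k))%N && (a <= a' + L ^ (n - k))%N.
Proof.
move=> kn; rewrite xcor_distE (invr_expn_nat kn).
rewrite ler_pM2r ?invr_gt0 ?ltr0n ?expn_gt0 ?L_gt0 //.
by rewrite ler_distl lerBlDr -!natrD !ler_nat.
Qed.

Lemma ltr_xcor_dist (k n a a' : nat) : (k <= n)%N ->
  (`|xcor R L n a - xcor R L n a'| < ((L ^ k)%:R)^-1)
    = (a' < a + L ^ (n - k))%N && (a < a' + L ^ (n - k))%N.
Proof.
move=> kn; rewrite xcor_distE (invr_expn_nat kn).
rewrite ltr_pM2r ?invr_gt0 ?ltr0n ?expn_gt0 ?L_gt0 //.
by rewrite ltr_distl ltrBlDr -!natrD !ltr_nat.
Qed.

End Cells.

Definition close_crossing_pairs (N B D : nat) : {set 'I_N * 'I_N} :=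
  [set aa : 'I_N * 'I_N |
     [&& aa.2 <= aa.1 + D, aa.1 <= aa.2 + D & aa.1 %/ B != aa.2 %/ B]%N].

(* A pair straddling the block boundary k * B is recorded by its orientation,
   by k, and by the distances of its two entries to that boundary. *)
Definition crossing_code (B a a' : nat) : bool * nat * nat * nat :=
  if (a < a')%N then (true, a' %/ B, a' %/ B * B - a - 1, a' - a' %/ B * B)%N
  else (false, a %/ B, a %/ B * B - a' - 1, a - a %/ B * B)%N.

Definition crossing_decode (B : nat) (t : bool * nat * nat * nat) : nat * nat :=
  let '(up, k, u, v) := t in
  if up then (k * B - u - 1, k * B + v)%N else (k * B + v, k * B - u - 1)%N.

Lemma crossing_boundary (B a a' : nat) : (0 < B)%N ->
  (a %/ B < a' %/ B)%N -> (a < a' %/ B * B <= a')%N.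
Proof. by move=> B_gt0; rewrite leq_divM andbT ltn_divLR. Qed.

Section CrossingCode.
Variables (B a a' : nat).
Hypotheses (B_gt0 : (0 < B)%N) (crossing : (a %/ B != a' %/ B)%N).

Lemma crossing_boundary_sym :
  if (a < a')%N then (a < a' %/ B * B <= a')%N else (a' < a %/ B * B <= a)%N.
Proof.
case: ltnP => [lt_aa'|le_a'a]; apply: crossing_boundary => //.
  by rewrite ltn_neqAle crossing leq_div2r // ltnW.
by rewrite ltn_neqAle eq_sym crossing leq_div2r.
Qed.

Lemma crossing_codeK : crossing_decode B (crossing_code B a a') = (a, a').
Proof.
move: crossing_boundary_sym; rewrite /crossing_code; case: ltnP => _ /=.
  by set k := (a' %/ B * B)%N => ?; congr pair; lia.
by set k := (a %/ B * B)%N => ?; congr pair; lia.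
Qed.

Lemma crossing_code_bounds (M D : nat) :
  (a' <= a + D)%N -> (a <= a' + D)%N -> (a < M * B)%N -> (a' < M * B)%N ->
  let: (_, k, u, v) := crossing_code B a a' in [/\ k <= M, u <= D & v <= D]%N.
Proof.
move: crossing_boundary_sym; rewrite /crossing_code; case: ltnP => _ /= + ? ? ? ?.
  have : (a' %/ B < M)%N by rewrite ltn_divLR.
  by set k := (a' %/ B * B)%N => ? ?; split; lia.
have : (a %/ B < M)%N by rewrite ltn_divLR.
by set k := (a %/ B * B)%N => ? ?; split; lia.
Qed.

End CrossingCode.

Lemma card_close_crossing_pairs (N M B D : nat) : (0 < B)%N -> (N <= M * B)%N ->
  (#|close_crossing_pairs N B D| <= 2 * M.+1 * D.+1 * D.+1)%N.
Proof.
move=> B_gt0 le_N_MB.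
pose code_ord (aa : 'I_N * 'I_N) : bool * 'I_M.+1 * 'I_D.+1 * 'I_D.+1 :=
  let: (up, k, u, v) := crossing_code B aa.1 aa.2 in (up, inord k, inord u, inord v).
suff /leq_card_in : {in close_crossing_pairs N B D &, injective code_ord}.
  by rewrite !card_prod card_bool !card_ord.
have lt_MB (x : 'I_N) : (x < M * B)%N by apply: leq_trans le_N_MB.
move=> [a a'] [c c']; rewrite !inE /= => /and3P[a1 a2 a3] /and3P[c1 c2 c3].
have := crossing_code_bounds B_gt0 a3 a1 a2 (lt_MB a) (lt_MB a').
have := crossing_code_bounds B_gt0 c3 c1 c2 (lt_MB c) (lt_MB c').
rewrite /code_ord /= => c_bounds a_bounds eq_code.
suff [/val_inj-> /val_inj->] : ((a : nat), (a' : nat)) = ((c : nat), (c' : nat)) by [].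
rewrite -(crossing_codeK B_gt0 a3) -(crossing_codeK B_gt0 c3).
move: a_bounds c_bounds eq_code.
case: (crossing_code B a a') => [[[up k] u] v].
case: (crossing_code B c c') => [[[up' k'] u'] v'] /= [? ? ?] [? ? ?].
case=> -> /(congr1 val) + /(congr1 val) + /(congr1 val).
by rewrite /= !inordK ?ltnS // => -> -> ->.
Qed.

Section Admissible.
Variables (R : realType) (L : nat) (S : nat -> set (R * R)).
Hypotheses (L_gt0 : (0 < L)%N) (S_adm : admissible_seq R L S).

Lemma admissible_le (m n : nat) : (m <= n)%N -> S n `<=` S m.
Proof.
have [_ [S_decr _]] := S_adm.
move=> /subnK <-; elim: (n - m)%N => //= k IHk.
exact: subset_trans (S_decr _) IHk.
Qed.

Lemma admissible_row_block (m n a b a' b' : nat) : (m <= n)%N ->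
  dsq R L n a b `<=` S n -> dsq R L n a' b' `<=` S n ->
  (a %/ L ^ (n - m) = a' %/ L ^ (n - m))%N ->
  (b %/ L ^ (n - m) = b' %/ L ^ (n - m))%N.
Proof.
move=> mn; have [_ [_ S_col]] := S_adm; have [f [_ Sm]] := S_col m.
suff row_of x y : dsq R L n x y `<=` S n ->
    (y %/ L ^ (n - m) = f (x %/ L ^ (n - m)))%N.
  by move=> /row_of-> /row_of-> ->.
move=> sub_xy; have := admissible_le mn (sub_xy _ (dsq_center_mem L_gt0 n x y)).
by rewrite Sm => -[c _ /(dsq_centerE L_gt0 x y c _ mn) [/eqP-> /eqP->]].
Qed.

Lemma admissible_column_row (n a b b' : nat) :
  dsq R L n a b `<=` S n -> dsq R L n a b' `<=` S n -> b = b'.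
Proof.
move=> sub_b sub_b'.
by have := admissible_row_block (leqnn n) sub_b sub_b' erefl; rewrite subnn !divn1.
Qed.

Lemma pair_set_columns (n i j : nat) (QQ : Didx L n * Didx L n) :
  (i <= n)%N -> (j <= n)%N -> QQ \in pair_set R L n i j S ->
  (QQ.1.1, QQ.2.1) \in close_crossing_pairs (L ^ n) (L ^ (n - j)) (L ^ (n - i)).
Proof.
move=> i_le_n j_le_n; rewrite !inE => -[sub1 [sub2 [dx dy]]] /=.
move: dx; rewrite ler_xcor_dist // => /andP[-> ->] /=.
apply/eqP => same_block.
have B_gt0 : (0 < L ^ (n - j))%N by rewrite expn_gt0 L_gt0.
have := admissible_row_block j_le_n sub1 sub2 same_block.
move=> /(eq_divn_ltn_dist B_gt0).
by rewrite -(ltr_xcor_dist (R := R) L_gt0) // ltNge dy.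
Qed.

Lemma pair_set_columns_inj (n i j : nat) :
  {in pair_set R L n i j S &, injective (fun QQ => (QQ.1.1, QQ.2.1))}.
Proof.
move=> [[a b] [a' b']] [[c d] [c' d']]; rewrite !inE.
move=> [sub_b [sub_b' _]] [sub_d [sub_d' _]] /= [eq_ac eq_ac'].
rewrite /inSn /= in sub_b sub_b' sub_d sub_d'.
subst c c'; congr (_, _); congr (_, _); apply: ord_inj.
  exact: admissible_column_row sub_b sub_d.
exact: admissible_column_row sub_b' sub_d'.
Qed.

Lemma card_pair_set (n i j : nat) : (i <= n)%N -> (j <= n)%N ->
  (#|pair_set R L n i j S| <= 2 * (L ^ j).+1 * (L ^ (n - i)).+1 * (L ^ (n - i)).+1)%N.
Proof.
move=> i_le_n j_le_n; rewrite -(card_in_imset (@pair_set_columns_inj n i j)).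
have B_gt0 : (0 < L ^ (n - j))%N by rewrite expn_gt0 L_gt0.
apply: leq_trans (@card_close_crossing_pairs (L ^ n) (L ^ j) _ _ B_gt0 _); last first.
  by rewrite -expnD subnKC.
apply/subset_leq_card/fintype.subsetP => _ /imsetP[QQ QQ_in ->].
exact: pair_set_columns.
Qed.

End Admissible.

Theorem lemmaA2 (R : realType) (L : nat) (hL : (2 <= L)%N) :
  exists C : R, forall (S : nat -> set (R * R)), admissible_seq R L S ->
    forall n i j : nat, (1 <= i <= n)%N -> (1 <= j <= n)%N ->
      (#|pair_set R L n i j S|%:R : R)
        <= C * (L%:R ^+ (2 * n + j) / L%:R ^+ (2 * i)).
Proof.
have L_gt0 : (0 < L)%N by apply: leq_trans hL.
exists 16%:R => S S_adm n i j /andP[_ i_le_n] /andP[_ j_le_n].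
set D := (L ^ (n - i))%N.
have D_gt0 : (0 < D)%N by rewrite expn_gt0 L_gt0.
have Lj_gt0 : (0 < L ^ j)%N by rewrite expn_gt0 L_gt0.
have card_le : (#|pair_set R L n i j S| <= 16 * (L ^ j * D * D))%N.
  by apply: leq_trans (card_pair_set L_gt0 S_adm i_le_n j_le_n) _; nia.
have expE : (L ^ (2 * n + j) = L ^ j * D * D * L ^ (2 * i))%N.
  by rewrite /D -!expnD; congr (L ^ _)%N; lia.
rewrite -!natrX expE natrM mulfK ?pnatr_eq0 -?lt0n ?expn_gt0 ?L_gt0 //.
by rewrite -natrM ler_nat.
Qed.
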